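(* Let $K\subset\mathbb{R}^d$ be compact and star-shaped, and for $x,y\in\mathbb{R}^d$ let $S(x,y)=\frac{x+y}2+\|x-y\|K$. Let $c>0$ and let $x,y,u,v\in\mathbb{R}^d$ satisfy $\|x-y\|\ge\|u-v\|$ and $\|\frac{x+y}2-\frac{u+v}2\|\le c\,\mathrm{diam}(K)\|x-y\|$. Then $$\mathrm{vol}(S(x,y)\setminus S(u,v))\ge\frac1{c+1}\frac{\mathrm{vol}(K)}{\mathrm{diam}(K)}\Big\|\frac{x+y}2-\frac{u+v}2\Big\|\,\|x-y\|^{d-1}.$$
   Context: $K$ star-shaped means $[0,z]\subset K$ for all $z\in K$. $\mathrm{diam}(K)=\sup\{\|u-v\|:u,v\in K\}$. *)

From HB Require Import structures.
From mathcomp Require Import all_boot all_order all_algebra.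
From mathcomp Require Import all_classical all_reals all_analysis.
Set Implicit Arguments. Unset Strict Implicit. Unset Printing Implicit Defensive.
Import Order.TTheory GRing.Theory Num.Theory.
Local Open Scope classical_set_scope.
Local Open Scope ring_scope.

Definition enorm (R : realType) (d : nat) (x : 'rV[R]_d) : R :=
  Num.sqrt (\sum_(i < d) x ord0 i ^+ 2).

Definition star_shaped (R : realType) (d : nat) (K : set 'rV[R]_d) : Prop :=
  forall z, K z -> forall t : R, 0 <= t <= 1 -> K (t *: z).

(* diam(K) = sup {||u - v|| : u, v in K} (as a real number; K will be compact,
   so this supremum is finite; for empty K the value is 0). *)
Definition diam (R : realType) (d : nat) (K : set 'rV[R]_d) : R :=
  fine (ereal_sup [set (enorm (u - v))%:E | u in K & v in K]).

Definition box (R : realType) (d : nat) (a b : 'rV[R]_d) : set 'rV[R]_d :=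
  [set z | forall i : 'I_d, a ord0 i <= z ord0 i <= b ord0 i].

Definition boxvol (R : realType) (d : nat) (a b : 'rV[R]_d) : R :=
  \prod_(i < d) Num.max 0 (b ord0 i - a ord0 i).

(* Lebesgue (outer) measure on R^d: infimum of the total volume of countable
   covers by boxes.  It coincides with Lebesgue measure on measurable sets. *)
Definition vol (R : realType) (d : nat) (A : set 'rV[R]_d) : \bar R :=
  ereal_inf [set s | exists a b : nat -> 'rV[R]_d,
    A `<=` \bigcup_k box (a k) (b k) /\
    s = (\sum_(0 <= k <oo) (boxvol (a k) (b k))%:E)%E].

Definition Sxy (R : realType) (d : nat) (K : set 'rV[R]_d) (x y : 'rV[R]_d)
  : set 'rV[R]_d :=
  [set (2^-1 *: (x + y)) + enorm (x - y) *: k | k in K].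

From HB Require Import structures.
From mathcomp Require Import all_boot all_order all_algebra.
From mathcomp Require Import all_classical all_reals all_analysis.
From mathcomp Require Import ring.
Import Order.TTheory GRing.Theory Num.Theory.
Import numFieldNormedType.Exports.
Set Implicit Arguments. Unset Strict Implicit. Unset Printing Implicit Defensive.
Local Open Scope classical_set_scope.
Local Open Scope ring_scope.

(** Put m = (x+y)/2, m' = (u+v)/2, r = ||x-y|| and w = (m'-m)/r.  The map
    k |-> m + r k sends K onto S(x,y) and, since K is star-shaped and
    ||u-v|| <= r, it sends K \ (w + K) into S(x,y) \ S(u,v).  Walking from a
    point of K in direction -w one leaves K within N = floor(diam K/||w||) + 1
    steps, so K is covered by N translates of K \ (w + K), whence
    vol K <= N r^-d vol (S(x,y) \ S(u,v)); the hypothesis on the midpoints gives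
    N <= (c+1) r diam K / ||m-m'||. *)

Lemma le_ereal_infD (R : realType) (S T : set (\bar R)) (x : \bar R) :
  (forall s, S s -> 0 <= s)%E -> (forall t, T t -> 0 <= t)%E ->
  (forall s t, S s -> T t -> x <= s + t)%E ->
  (x <= ereal_inf S + ereal_inf T)%E.
Proof.
move=> S0 T0 xST.
have [infS0 infT0] : (0 <= ereal_inf S)%E /\ (0 <= ereal_inf T)%E.
  by split; apply/ereal_infP.
have neNy y : (0 <= y)%E -> y != -oo%E by case: y.
have [->|Sy] := eqVneq (ereal_inf S) +oo%E; first by rewrite addye ?leey ?neNy.
have [->|Ty] := eqVneq (ereal_inf T) +oo%E; first by rewrite addey ?leey ?neNy.
have [Sfin Tfin] : ereal_inf S \is a fin_num /\ ereal_inf T \is a fin_num.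
  by rewrite !ge0_fin_numE // !ltey.
rewrite -leeBlDr //; apply/ereal_infP => s Ss.
have [->|sy] := eqVneq s +oo%E; first exact: leey.
have sfin : s \is a fin_num by rewrite ge0_fin_numE ?ltey ?S0.
rewrite leeBlDr // addeC -leeBlDr //; apply/ereal_infP => t Tt.
by rewrite leeBlDr // addeC; exact: xST.
Qed.

Lemma nneseries_interleave_le (R : realType) (f g : nat -> \bar R) :
  (forall n, 0 <= f n)%E -> (forall n, 0 <= g n)%E ->
  (\sum_(0 <= n <oo) (if odd n then g n./2 else f n./2) <=
   \sum_(0 <= n <oo) f n + \sum_(0 <= n <oo) g n)%E.
Proof.
move=> f0 g0.
have fg0 n : (0 <= (if odd n then g n./2 else f n./2))%E by case: ifP.
apply: lime_le; first exact: is_cvg_nneseries.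
apply: nearW => M.
apply: (@le_trans _ _ (\sum_(0 <= i < M.*2) (if odd i then g i./2 else f i./2))%E).
  by apply: lee_sum_nneg_natr => [n _ _|]; rewrite ?fg0 // -addnn leq_addr.
have -> : (\sum_(0 <= i < M.*2) (if odd i then g i./2 else f i./2) =
          \sum_(0 <= i < M) (f i + g i))%E.
  elim: M => [|M IH]; first by rewrite !big_geq.
  rewrite doubleS !big_nat_recr //= IH /= odd_double /= uphalf_double doubleK.
  by rewrite addeA.
by rewrite big_split /=; apply: leeD; apply: nneseries_lim_ge.
Qed.

Lemma lee_mul_le1 (R : realType) (a b : R) (u v : \bar R) :
  0 <= a -> (0 <= v)%E -> (u <= b%:E * v)%E -> a * b <= 1 -> (a%:E * u <= v)%E.
Proof.
move=> a0 v0 uv ab; apply: le_trans (lee_wpmul2l _ uv) _; first by rewrite lee_fin.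
by rewrite muleA -EFinM -[X in (_ <= X)%E]mul1e; apply: lee_wpmul2r; rewrite ?lee_fin.
Qed.

Lemma exists_natmul_between (R : realType) (a b e : R) :
  0 <= a -> 0 < e -> e <= b -> exists N : nat, a < N.+1%:R * e <= a + b.
Proof.
move=> a0 e0 eb; exists (Num.truncn (a / e)).
rewrite -ltr_pdivrMr // truncnS_gt /= -addn1 natrD mulrDl mul1r lerD //.
by rewrite -ler_pdivlMr // truncn_le divr_ge0 // ltW.
Qed.

Section homothety.
Variables (R : realType) (d : nat).
Implicit Types (K E : set 'rV[R]_d) (a m w : 'rV[R]_d).

Definition homothety a (r : R) E := [set a + r *: z | z in E].

Definition translates w E n :=
  \bigcup_(i in `I_n) homothety (i%:R *: w) 1 E.

Lemma sub_translates_setD K w N :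
  (forall z, K z -> ~ K (z - N%:R *: w)) ->
  K `<=` translates w (K `\` homothety w 1 K) N.
Proof.
move=> Kgap z Kz.
have [i iN [Kzi Kzi1]] :
    exists2 i, (i < N)%N & K (z - i%:R *: w) /\ ~ K (z - i.+1%:R *: w).
  move: (Kgap z Kz); clear Kgap; elim: N => [|N IH] KzN.
    by rewrite scale0r subr0 in KzN.
  have [KzN'|/IH [i iN Ki]] := pselect (K (z - N%:R *: w)); first by exists N.
  by exists i => //; rewrite ltnS ltnW.
exists i => //; exists (z - i%:R *: w); last by rewrite scale1r addrC subrK.
split => // -[k Kk kE]; apply: Kzi1.
by rewrite [i.+1%:R]mulrSr scalerDl scale1r opprD addrA -kE scale1r addrC addKr.
Qed.

Lemma star_setD_translate_sub K m (m' : 'rV[R]_d) (r r' : R) :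
  star_shaped K -> 0 < r -> 0 <= r' <= r ->
  K `\` homothety (r^-1 *: (m' - m)) 1 K `<=`
  homothety (- (r^-1 *: m)) r^-1 (homothety m r K `\` homothety m' r' K).
Proof.
move=> Kstar r0 /andP[r'0 r'r] k [Kk kNK].
have rK (z : 'rV[R]_d) : r^-1 *: (r *: z) = z.
  by rewrite scalerA mulVf ?gt_eqF // scale1r.
exists (m + r *: k); last by rewrite scalerDr rK addKr.
split; first by exists k.
move=> [k' Kk' k'E]; apply: kNK; exists (r' / r *: k').
  by apply: Kstar => //; rewrite divr_ge0 ?(ltW r0) //= ler_pdivrMr // mul1r.
rewrite scale1r -[k in RHS]rK -[r *: k](addKr m) -k'E.
by rewrite !scalerDr scalerN scalerA mulrC addrA [- _ + _]addrC.
Qed.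

End homothety.

Section outer_volume.
Variables (R : realType) (d : nat).
Implicit Types (A B E : set 'rV[R]_d) (a b w : 'rV[R]_d).

Lemma boxvol_ge0 a b : 0 <= boxvol a b.
Proof. by apply: prodr_ge0 => i _; rewrite le_max lexx. Qed.

Lemma box_cover_sum_ge0 (a b : nat -> 'rV[R]_d) :
  (0 <= \sum_(0 <= k <oo) (boxvol (a k) (b k))%:E)%E.
Proof. by apply: nneseries_ge0 => k _ _; rewrite lee_fin boxvol_ge0. Qed.

Lemma vol_ge0 A : (0 <= vol A)%E.
Proof. by apply/ereal_infP => s [a [b [_ ->]]]; exact: box_cover_sum_ge0. Qed.

Lemma le_vol A B : A `<=` B -> (vol A <= vol B)%E.
Proof.
move=> AB; apply: ereal_inf_le_tmp => s [a [b [Bab ->]]]; exists a, b.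
by split => //; exact: subset_trans Bab.
Qed.

Lemma vol_setU_le A B : (vol (A `|` B) <= vol A + vol B)%E.
Proof.
apply: le_ereal_infD; try by move=> _ [a [b [_ ->]]]; exact: box_cover_sum_ge0.
move=> _ _ [a1 [b1 [Aab1 ->]]] [a2 [b2 [Bab2 ->]]].
pose a n := if odd n then a2 n./2 else a1 n./2.
pose b n := if odd n then b2 n./2 else b1 n./2.
apply: (@le_trans _ _ (\sum_(0 <= n <oo) (boxvol (a n) (b n))%:E)%E).
  apply: ereal_inf_lbound; exists a, b; split => // z [/Aab1[k _ zk]|/Bab2[k _ zk]].
    by exists k.*2 => //; rewrite /a /b odd_double doubleK.
  by exists k.*2.+1 => //; rewrite /a /b /= odd_double /= uphalf_double.
rewrite (eq_eseriesr (g := fun n => if odd n then (boxvol (a2 n./2) (b2 n./2))%:E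
                                    else (boxvol (a1 n./2) (b1 n./2))%:E)); last first.
  by move=> n _; rewrite /a /b; case: ifP.
by apply: nneseries_interleave_le => n; rewrite lee_fin boxvol_ge0.
Qed.

Lemma boxvol_homothety a a' b' (r : R) :
  0 < r -> boxvol (a + r *: a') (a + r *: b') = r ^+ d * boxvol a' b'.
Proof.
move=> r0; rewrite /boxvol -[in r ^+ d](card_ord d) -prodr_const -big_split /=.
apply: eq_bigr => i _; rewrite !mxE.
have -> : a ord0 i + r * b' ord0 i - (a ord0 i + r * a' ord0 i) =
          r * (b' ord0 i - a' ord0 i) by ring.
by rewrite maxr_pMr ?mulr0 // ltW.
Qed.

Lemma vol_homothety_le a (r : R) A :
  0 < r -> (vol (homothety a r A) <= (r ^+ d)%:E * vol A)%E.
Proof.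
move=> r0; rewrite /vol -ereal_inf_pZl ?exprn_gt0 //.
apply: ereal_inf_le_tmp => _ [_ [a1 [b1 [Aab ->]]] <-].
exists (fun k => a + r *: a1 k), (fun k => a + r *: b1 k); split.
  move=> _ [z /Aab[k _ zk] <-]; exists k => // i; rewrite !mxE.
  by have /andP[z1 z2] := zk i; rewrite !lerD2l !ler_pM2l // z1 z2.
rewrite -nneseriesZl => [|k _]; last by rewrite lee_fin boxvol_ge0.
by apply: eq_eseriesr => k _; rewrite boxvol_homothety // EFinM.
Qed.

Lemma vol_translate_le a A : (vol (homothety a 1 A) <= vol A)%E.
Proof. by apply: le_trans (@vol_homothety_le a 1 A ltr01) _; rewrite expr1n mul1e. Qed.

(* Stated for n.+1 copies: in dimension 0 every box has volume 1, so vol set0 = +oo. *)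
Lemma vol_translates_le w E n :
  (vol (translates w E n.+1) <= n.+1%:R%:E * vol E)%E.
Proof.
elim: n => [|n IH].
  rewrite mul1e; apply: le_trans (vol_translate_le 0 E).
  by apply: le_vol => z [i /=]; rewrite ltnS leqn0 => /eqP ->; rewrite scale0r.
apply: (@le_trans _ _ (vol (translates w E n.+1 `|` homothety (n.+1%:R *: w) 1 E))).
  apply: le_vol => z [i /=]; rewrite ltnS leq_eqVlt => /orP[/eqP -> Ez|ilt Ez].
    by right.
  by left; exists i.
apply: le_trans (vol_setU_le _ _) _; apply: le_trans (leeD IH (vol_translate_le _ _)) _.
by rewrite -[n.+2]addn1 natrD EFinD ge0_muleDl ?lee_fin // ?vol_ge0 mul1e.
Qed.

End outer_volume.

Section euclidean_norm.
Variables (R : realType) (d : nat).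
Implicit Types (x y : 'rV[R]_d) (K : set 'rV[R]_d).

Lemma enorm_ge0 x : 0 <= enorm x.
Proof. exact: sqrtr_ge0. Qed.

Lemma enormZ (a : R) x : enorm (a *: x) = `|a| * enorm x.
Proof.
rewrite /enorm -sqrtr_sqr -sqrtrM ?sqr_ge0 // mulr_sumr.
by congr Num.sqrt; apply: eq_bigr => i _; rewrite mxE exprMn.
Qed.

Lemma enorm_distC x y : enorm (x - y) = enorm (y - x).
Proof. by rewrite -opprB -scaleN1r enormZ normrN normr1 mul1r. Qed.

Lemma enorm_le_diam K x y : 0 < diam K -> K x -> K y -> enorm (x - y) <= diam K.
Proof.
rewrite /diam => D0 Kx Ky.
have : ((enorm (x - y))%:E <= ereal_sup [set (enorm (u - v))%:E | u in K & v in K])%E.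
  by apply: ereal_sup_ubound; exists x => //; exists y.
by move: D0; case: ereal_sup => //=; rewrite ltxx.
Qed.

Lemma vol_le_translates_setD K w N : 0 < diam K -> diam K < N.+1%:R * enorm w ->
  (vol K <= N.+1%:R%:E * vol (K `\` homothety w 1 K))%E.
Proof.
move=> D0 DN; apply: le_trans (vol_translates_le _ _ _).
apply/le_vol/sub_translates_setD => z Kz KzN.
have := enorm_le_diam D0 Kz KzN.
by rewrite opprB addrC subrK enormZ ger0_norm // leNgt DN.
Qed.

End euclidean_norm.

Lemma enorm_rV0 (R : realType) (x : 'rV[R]_0) : enorm x = 0.
Proof. by rewrite /enorm big_ord0 sqrtr0. Qed.

Lemma vol_le_homothety_setD (R : realType) (d : nat) (K : set 'rV[R]_d)
    (m m' : 'rV[R]_d) (r r' : R) (N : nat) :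
  star_shaped K -> 0 < r -> 0 <= r' <= r -> 0 < diam K ->
  diam K * r < N.+1%:R * enorm (m - m') ->
  (vol K <=
   (N.+1%:R * r^-1 ^+ d)%:E * vol (homothety m r K `\` homothety m' r' K))%E.
Proof.
move=> Kstar r0 r'r D0 DN; set w := r^-1 *: (m' - m).
have hK : (vol K <= N.+1%:R%:E * vol (K `\` homothety w 1 K))%E.
  apply: vol_le_translates_setD => //.
  rewrite enormZ ger0_norm ?invr_ge0 ?ltW // enorm_distC mulrCA.
  by rewrite mulrC ltr_pdivlMr.
rewrite EFinM -muleA; apply: le_trans hK _.
apply: lee_wpmul2l; first by rewrite lee_fin.
apply: le_trans (le_vol (star_setD_translate_sub Kstar r0 r'r)) _.
by apply: vol_homothety_le; rewrite invr_gt0.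
Qed.

Theorem lemma4p2 (R : realType) (d : nat)
  (K : set 'rV[R]_d) (Kcompact : compact K) (Kstar : star_shaped K)
  (c : R) (hc : 0 < c) (x y u v : 'rV[R]_d)
  (hxy : enorm (u - v) <= enorm (x - y))
  (hmid : enorm (2^-1 *: (x + y) - 2^-1 *: (u + v))
            <= c * diam K * enorm (x - y)) :
  (((c + 1)^-1 * enorm (2^-1 *: (x + y) - 2^-1 *: (u + v))
      * enorm (x - y) ^+ d.-1 / diam K)%:E * vol K
   <= vol (Sxy K x y `\` Sxy K u v))%E.
Proof.
case: d K Kcompact Kstar x y u v hxy hmid => [|d] K _ Kstar x y u v hxy hmid.
  by rewrite enorm_rV0 mulr0 !mul0r mul0e; exact: vol_ge0.
set r := enorm (x - y) in hxy hmid *; set m := 2^-1 *: (x + y) in hmid *.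
set del := enorm (m - _) in hmid *; set D := diam K in hmid *.
set C := _ / D; have [C_le0|C_gt0] := leP C 0.
  by apply: le_trans (vol_ge0 _); apply: mule_le0_ge0 => //; exact: vol_ge0.
have c1_gt0 : 0 < c + 1 by rewrite addr_gt0.
have del_gt0 : 0 < del.
  rewrite lt_def enorm_ge0 andbT; apply: contraTneq C_gt0 => del0.
  by rewrite /C del0 !(mulr0, mul0r) ltxx.
have D_gt0 : 0 < D.
  rewrite ltNge; apply: contraTN C_gt0 => D_le0; rewrite -leNgt /C.
  by rewrite mulr_ge0_le0 ?invr_le0 // !mulr_ge0 ?exprn_ge0 ?enorm_ge0 ?invr_ge0 ?ltW.
have r_gt0 : 0 < r.
  rewrite lt_def enorm_ge0 andbT; apply: contraTneq hmid => r0.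
  by rewrite r0 mulr0 -ltNge.
have [N /andP[DN NcD]] :=
  exists_natmul_between (mulr_ge0 (ltW D_gt0) (ltW r_gt0)) del_gt0 hmid.
apply: (lee_mul_le1 (ltW C_gt0) (vol_ge0 _)
                    (vol_le_homothety_setD Kstar r_gt0 _ D_gt0 DN)).
  by rewrite enorm_ge0.
have -> : C * (N.+1%:R * r^-1 ^+ d.+1) = N.+1%:R * del / ((c + 1) * (D * r)).
  by rewrite /C /= exprVn exprS; field; rewrite !gt_eqF ?exprn_gt0.
by rewrite ler_pdivrMr ?mul1r ?mulr_gt0 // mulrDl mul1r addrC mulrA.
Qed.
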